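(* Let $R$ be a $*$-ring with $2\in U(R)$. The following are equivalent: (1) $R$ is clean and every unit $u$ of $R$ satisfies $u^*=u$; (2) $R$ is $*$-clean and $*$ is the identity map of $R$.
   Context: A $*$-ring is a ring with identity with an involution $*$. A projection is $p$ with $p^2=p=p^*$. $R$ is clean if every element is a sum of an idempotent and a unit; $*$-clean if every element is a sum of a projection and a unit. *)

From mathcomp Require Import all_boot all_order all_algebra.
Set Implicit Arguments. Unset Strict Implicit. Unset Printing Implicit Defensive.
Import GRing.Theory.
Local Open Scope ring_scope.

Definition is_unit (R : pzRingType) (u : R) : Prop :=
  exists v : R, u * v = 1 /\ v * u = 1.

Definition idempotent_el (R : pzRingType) (e : R) : Prop := e * e = e.

Definition involution (R : pzRingType) (star : R -> R) : Prop :=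
  (forall a b, star (a + b) = star a + star b) /\
  (forall a b, star (a * b) = star b * star a) /\
  (forall a, star (star a) = a).

Definition projection (R : pzRingType) (star : R -> R) (p : R) : Prop :=
  p * p = p /\ star p = p.

Definition clean (R : pzRingType) : Prop :=
  forall x : R, exists e u, idempotent_el e /\ is_unit u /\ x = e + u.

Definition star_clean (R : pzRingType) (star : R -> R) : Prop :=
  forall x : R, exists p u, projection star p /\ is_unit u /\ x = p + u.

From mathcomp Require Import all_boot all_order all_algebra.
Local Open Scope ring_scope.
Import GRing.Theory.
Set Implicit Arguments. Unset Strict Implicit. Unset Printing Implicit Defensive.

(* If [*] fixes every unit, it fixes every idempotent [e]: the reflection
   [1 - 2e] is its own inverse, so [star (1 - 2e) = 1 - 2e], and halving gives
   [star e = e].  Every element of a clean ring is then a sum of fixed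
   elements. *)

Lemma mulr2n_inj_unit (R : pzRingType) :
  is_unit (2 : R) -> injective (fun x : R => x *+ 2).
Proof.
move=> [w [_ w2]] x y /= xy2.
have : w * (2 * x) = w * (2 * y) by rewrite !mulr_natl xy2.
by rewrite !mulrA w2 !mul1r.
Qed.

Lemma reflection_sqr (R : pzRingType) (e : R) :
  idempotent_el e -> (1 - e *+ 2) * (1 - e *+ 2) = 1.
Proof.
move=> ee; rewrite mulrBl mul1r mulrBr mulr1 mulrnAl mulrnAr ee.
by rewrite opprB addrK subrK.
Qed.

Lemma is_unit_reflection (R : pzRingType) (e : R) :
  idempotent_el e -> is_unit (1 - e *+ 2).
Proof. by move=> ee; exists (1 - e *+ 2); rewrite reflection_sqr. Qed.

Lemma is_unit1 (R : pzRingType) : is_unit (1 : R).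
Proof. by exists 1; rewrite mulr1. Qed.

Section FixedUnits.

Variables (R : pzRingType) (star : R -> R).
Hypothesis starD : forall a b, star (a + b) = star a + star b.
Hypothesis star_unit : forall u : R, is_unit u -> star u = u.

Lemma star_mulr2n (x : R) : star (x *+ 2) = star x *+ 2.
Proof. by rewrite !mulr2n starD. Qed.

Lemma star_idempotent (e : R) :
  is_unit (2 : R) -> idempotent_el e -> star e = e.
Proof.
move=> u2 ee; apply: (mulr2n_inj_unit u2) => /=.
apply: (@addrI _ (1 - e *+ 2)); rewrite subrK -star_mulr2n.
by rewrite -{1}(star_unit (is_unit_reflection ee)) -starD subrK (star_unit (is_unit1 R)).
Qed.

Lemma clean_star_id : is_unit (2 : R) -> clean R -> forall x : R, star x = x.
Proof.
move=> u2 cl x; have [e [u [ee [uu ->]]]] := cl x.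
by rewrite starD star_idempotent // star_unit.
Qed.

End FixedUnits.

Lemma star_clean_clean (R : pzRingType) (star : R -> R) :
  star_clean star -> clean R.
Proof. by move=> sc x; have [p [u [[pp _] [uu ->]]]] := sc x; exists p, u. Qed.

Lemma clean_star_clean_id (R : pzRingType) (star : R -> R) :
  (forall x : R, star x = x) -> clean R -> star_clean star.
Proof.
by move=> sid cl x; have [e [u [ee [uu ->]]]] := cl x; exists e, u.
Qed.

Theorem corollary2p4 (R : pzRingType) (star : R -> R) :
  involution star -> is_unit (2 : R) ->
  ((clean R /\ forall u : R, is_unit u -> star u = u) <->
   (star_clean star /\ forall x : R, star x = x)).
Proof.
move=> [starD _] u2; split.
- move=> [cl star_unit]; have sid := clean_star_id starD star_unit u2 cl.
  by split=> //; apply: clean_star_clean_id.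
- move=> [sc sid]; split; last by move=> u _; apply: sid.
  exact: star_clean_clean sc.
Qed.
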